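(* There exists an infinite family of tries $\mathcal T$ with $n$ nodes (for arbitrarily large $n$) for which $r=\Theta(n\mathcal H_0(\mathcal T))=\Theta(n)$, where $r$ is the number of XBWT runs of $\mathcal T$.
   Context: A trie over a finite totally ordered alphabet $\Sigma$ is a rooted ordered tree with edges labeled by symbols of $\Sigma$ such that edges leaving the same node have distinct labels and siblings are ordered by their incoming labels. $n_c$ is the number of edges labeled $c$ and $out(u)$ the set of labels of edges leaving $u$. Logs base 2, $0\log(x/0)=0$. $\mathcal H_0(\mathcal T)=\sum_{c\in\Sigma}\left[\frac{n_c}{n}\log\frac{n}{n_c}+\frac{n-n_c}{n}\log\frac{n}{n-n_c}\right]$. Let $u_1,\dots,u_n$ be the nodes sorted co-lexicographically (right-to-left comparison, $\epsilon$ smallest) by the root-to-node path label. An index $i\in[n]$ is a $c$-run break if $c\in out(u_i)$ and either $i=n$ or $c\notin out(u_{i+1})$; $r=\sum_{c\in\Sigma}r_c$ where $r_c$ is the number of $c$-run breaks. *)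

From Stdlib Require Import Reals.
From mathcomp Require Import all_boot.

Set Implicit Arguments.
Unset Strict Implicit.
Unset Printing Implicit Defensive.

(* A trie over the totally ordered alphabet 'I_sigma (ordered by value) is
   represented by the list of its nodes, each node identified with its
   root-to-node path label (a word).
   Edges correspond to non-root nodes: the edge entering w = rcons u c has
   label c and leaves u. *)
Definition word (sigma : nat) := seq 'I_sigma.

Definition is_trie sigma (T : seq (word sigma)) : Prop :=
  [::] \in T /\ uniq T /\ (forall (u : word sigma) c, rcons u c \in T -> u \in T).

Definition nnodes sigma (T : seq (word sigma)) : nat := size T.

Definition nlab sigma (T : seq (word sigma)) (c : 'I_sigma) : nat :=
  count (fun w : word sigma => (w != [::]) && (last c w == c)) T.

Definition in_out sigma (T : seq (word sigma)) (u : word sigma) (c : 'I_sigma) : bool :=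
  rcons u c \in T.

Fixpoint lex_le (s t : seq nat) : bool :=
  match s, t with
  | [::], _ => true
  | _ :: _, [::] => false
  | a :: s', b :: t' => (a < b) || ((a == b) && lex_le s' t')
  end.

Definition colex_le sigma (u v : word sigma) : bool :=
  lex_le (map val (rev u)) (map val (rev v)).

Definition colex_sorted sigma (T : seq (word sigma)) : seq (word sigma) :=
  sort (@colex_le sigma) T.

(* number of c-run breaks (0-based index i here corresponds to i+1) *)
Definition runs_c sigma (T : seq (word sigma)) (c : 'I_sigma) : nat :=
  let s := colex_sorted T in
  \sum_(i < size s)
     [&& in_out T (nth [::] s i) c
       & (i.+1 == size s) || ~~ in_out T (nth [::] s i.+1) c].

Definition runs sigma (T : seq (word sigma)) : nat :=
  \sum_(c < sigma) runs_c T c.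

Local Open Scope R_scope.

Definition log2 (x : R) : R := ln x / ln 2.

Definition xlogterm (n k : nat) : R :=
  if k == 0%N then 0 else INR k / INR n * log2 (INR n / INR k).

Definition H0 sigma (T : seq (word sigma)) : R :=
  let n := nnodes T in
  foldr Rplus 0
    (map (fun c => xlogterm n (nlab T c) + xlogterm n (n - nlab T c)%N)
         (enum 'I_sigma)).

From Stdlib Require Import Reals Lra.
From mathcomp Require Import all_boot zify.

(* The witnesses are the complete binary tries of depth d >= 1.  Co-lexicographic
   order on their nodes is lexicographic order on the reversed words, i.e. the
   preorder of the complete binary tree, in which every internal node is
   immediately followed by its first child.  Hence for each letter c the c-runs
   break exactly after the 2^(d-1) nodes of depth d-1, and r = 2^d.  Since
   n = 2^(d+1) - 1 and n_c = 2^d - 1 for both letters, H_0 lies between two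
   positive constants, so r, n and n H_0 are within constant factors of each
   other. *)

Set Implicit Arguments.
Unset Strict Implicit.
Unset Printing Implicit Defensive.

Lemma lex_le_trans : transitive lex_le.
Proof.
move=> y x z; elim: x y z => [|a x IH] [|b y] [|c z] //=.
move=> /orP[ab|/andP[/eqP-> xy]] /orP[bc|/andP[/eqP<- yz]].
- by rewrite (ltn_trans ab bc).
- by rewrite ab.
- by rewrite bc.
- by rewrite eqxx (IH _ _ xy yz) orbT.
Qed.

Section RunBreaks.

Variables (T : Type) (P : pred T).

Fixpoint nbreaks (s : seq T) : nat :=
  if s is x :: s' then
    (P x && (if s' is y :: _ then ~~ P y else true)) + nbreaks s'
  else 0.

Lemma sum_breaksE x0 s :
  \sum_(i < size s) [&& P (nth x0 s i) & (i.+1 == size s) || ~~ P (nth x0 s i.+1)]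
  = nbreaks s.
Proof.
elim: s => [|x s IH]; first by rewrite big_ord0.
by rewrite big_ord_recl /= -IH; case: s {IH}.
Qed.

Lemma nbreaks_cat x0 s1 s2 :
  ~~ P (last x0 s1) -> nbreaks (s1 ++ s2) = nbreaks s1 + nbreaks s2.
Proof.
elim: s1 x0 => [|x s1 IH] x0 //= Plast.
case: s1 IH Plast => [|y s1] IH Plast; first by rewrite /= (negbTE Plast) addn0.
by have /= -> := IH x Plast; rewrite addnA.
Qed.

Lemma nbreaks_cons_true x y s : P y -> nbreaks (x :: y :: s) = nbreaks (y :: s).
Proof. by move=> Py /=; rewrite Py andbF. Qed.

End RunBreaks.

Lemma eq_nbreaks T (P Q : pred T) : P =1 Q -> nbreaks P =1 nbreaks Q.
Proof.
move=> eqPQ; elim=> //= x s ->; rewrite eqPQ.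
by case: s => //= y s; rewrite eqPQ.
Qed.

Lemma nbreaks_map T U (P : pred U) (f : T -> U) s :
  nbreaks P (map f s) = nbreaks (preim f P) s.
Proof. by elim: s => //= x s ->; case: s. Qed.

Lemma runs_cE sigma (T : seq (word sigma)) c :
  runs_c T c = nbreaks (in_out T ^~ c) (colex_sorted T).
Proof. exact: sum_breaksE. Qed.

Fixpoint words_upto (k : nat) : seq (word 2) :=
  if k is k'.+1 then
    [::] :: (map (cons ord0) (words_upto k') ++ map (cons ord_max) (words_upto k'))
  else [:: [::]].

Definition complete_trie (d : nat) : seq (word 2) := map rev (words_upto d).

Lemma ord2P (a : 'I_2) : a = ord0 \/ a = ord_max.
Proof. by case: a => [[|[|//]]] ?; [left | right]; apply: val_inj. Qed.

Lemma mem_map_cons (T : eqType) (a b : T) (x : seq T) s :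
  (a :: x \in map (cons b) s) = (a == b) && (x \in s).
Proof.
apply/mapP/andP => [[y ys [-> ->]]|[/eqP -> xs]]; first by rewrite eqxx.
by exists x.
Qed.

Lemma mem_words_upto k x : (x \in words_upto k) = (size x <= k).
Proof.
elim: k x => [|k IH] [|a x] //.
rewrite /= in_cons mem_cat !mem_map_cons IH.
by case: (ord2P a) => ->; rewrite eqxx ?orbF.
Qed.

Lemma uniq_words_upto k : uniq (words_upto k).
Proof.
elim: k => //= k IH.
rewrite cat_uniq !map_inj_uniq //; try by move=> ? ? [].
rewrite mem_cat IH !andbT; apply/andP; split.
  by apply/norP; split; apply/negP => /mapP[].
by apply/hasPn => _ /mapP[x _ ->]; rewrite mem_map_cons.
Qed.

Lemma sorted_words_upto k :
  sorted (relpre (map val) lex_le) (words_upto k).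
Proof.
have lex_trans : transitive (relpre (map val) lex_le : rel (word 2)).
  by move=> y x z /=; exact: lex_le_trans.
rewrite sorted_pairwise //; elim: k => //= k IH.
rewrite pairwise_cat !pairwise_map; apply/and4P; split.
- by apply/allP.
- by apply/allrelP => _ _ /mapP[x _ ->] /mapP[y _ ->].
- exact: sub_pairwise IH.
- exact: sub_pairwise IH.
Qed.

Lemma size_words_upto k : (size (words_upto k)).+1 = 2 ^ k.+1.
Proof.
elim: k => //= k IH.
by rewrite size_cat !size_map expnS -IH mul2n -addnn addSn addnS.
Qed.

Lemma last_words_upto k : last [::] (words_upto k) = nseq k ord_max.
Proof.
elim: k => //= k IH; rewrite last_cat.
by case: k IH => //= k IH; rewrite last_map IH.
Qed.

Lemma mem_complete_trie d w : (w \in complete_trie d) = (size w <= d).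
Proof.
by rewrite -{1}(revK w) (mem_map (can_inj (@revK _))) mem_words_upto size_rev.
Qed.

Lemma is_trie_complete_trie d : is_trie (complete_trie d).
Proof.
split; first by rewrite mem_complete_trie.
split; first by rewrite map_inj_uniq ?uniq_words_upto //; exact: can_inj (@revK _).
by move=> u c; rewrite !mem_complete_trie size_rcons => /ltnW.
Qed.

Lemma colex_sorted_complete_trie d :
  colex_sorted (complete_trie d) = complete_trie d.
Proof.
apply: sorted_sort; first by move=> y x z; exact: lex_le_trans.
rewrite sorted_map; apply: sub_sorted (sorted_words_upto d) => x y.
by rewrite /relpre /colex_le /= !revK.
Qed.

Lemma nnodes_complete_trie d : (nnodes (complete_trie d)).+1 = 2 ^ d.+1.
Proof. by rewrite /nnodes size_map size_words_upto. Qed.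

Lemma nlab_complete_trie d c : (nlab (complete_trie d.+1) c).+1 = 2 ^ d.+1.
Proof.
have last_rev_cons a :
    preim (cons a) (preim rev (fun w => (w != [::]) && (last c w == c)))
    =1 (fun=> a == c).
  by move=> x; rewrite /= rev_cons last_rcons -size_eq0 size_rcons.
rewrite /nlab /complete_trie /= count_map count_cat !count_map.
rewrite !(eq_count (last_rev_cons _)) -size_words_upto.
by case: (ord2P c) => ->; rewrite eqxx count_predT count_pred0 ?addn0.
Qed.

Lemma nbreaks_words_upto d :
  nbreaks (fun x => size x < d.+1) (words_upto d.+1) = 2 ^ d.
Proof.
elim: d => // d IH.
set W := words_upto d.+1.
have W_nil : W = [::] :: behead W by [].
have -> : words_upto d.+2 = [::] :: map (cons ord0) W ++ map (cons ord_max) W by [].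
rewrite {1}W_nil map_cons cat_cons nbreaks_cons_true // -cat_cons -map_cons -W_nil.
rewrite (nbreaks_cat (x0 := [:: ord0])); last first.
  by rewrite last_map last_words_upto /= size_nseq ltnn.
have shift a :
  preim (cons a) (fun x : word 2 => size x < d.+2) =1 (fun x => size x < d.+1).
  by [].
by rewrite !nbreaks_map !(eq_nbreaks (shift _)) IH expnS mul2n addnn.
Qed.

Lemma runs_complete_trie d : runs (complete_trie d.+1) = 2 ^ d.+1.
Proof.
have runs_c_eq c : runs_c (complete_trie d.+1) c = 2 ^ d.
  rewrite runs_cE colex_sorted_complete_trie.
  rewrite (@eq_nbreaks _ _ (fun u => size u < d.+1)); last first.
    by move=> u; rewrite /in_out mem_complete_trie size_rcons.
  rewrite nbreaks_map -(nbreaks_words_upto d); apply: eq_nbreaks => x.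
  by rewrite /= size_rev.
by rewrite /runs (eq_bigr _ (fun c _ => runs_c_eq c)) sum_nat_const card_ord expnS.
Qed.

Local Open Scope R_scope.

Lemma foldr_Rplus_const T (s : seq T) (v : R) :
  foldr Rplus 0 (map (fun=> v) s) = INR (size s) * v.
Proof.
elim: s => [|x s IH]; first by rewrite /= Rmult_0_l.
by rewrite [LHS]/= IH -[size (x :: s)]/(size s).+1 S_INR; ring.
Qed.

Lemma H0_const_nlab sigma (T : seq (word sigma)) k :
  (forall c, nlab T c = k) ->
  H0 T = INR sigma * (xlogterm (nnodes T) k + xlogterm (nnodes T) (nnodes T - k)).
Proof.
move=> nlabT; rewrite /H0; under eq_map => c do rewrite nlabT.
by rewrite foldr_Rplus_const size_enum_ord.
Qed.

Lemma ln2_gt0 : 0 < ln 2.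
Proof. by have := ln_lt_2; lra. Qed.

Lemma log2_le x y : 0 < x -> x <= y -> log2 x <= log2 y.
Proof.
move=> x_gt0 [xy|<-]; last exact: Rle_refl.
apply: Rmult_le_compat_r; first by left; apply: Rinv_0_lt_compat; exact: ln2_gt0.
by left; apply: ln_increasing.
Qed.

Lemma log2_1 : log2 1 = 0.
Proof. by rewrite /log2 ln_1 /Rdiv Rmult_0_l. Qed.

Lemma log2_2 : log2 2 = 1.
Proof. by rewrite /log2 /Rdiv Rinv_r //; have := ln2_gt0; lra. Qed.

Lemma log2_4 : log2 4 = 2.
Proof.
rewrite /log2 (_ : 4 = 2 * 2); last by lra.
by rewrite ln_mult; try lra; field; have := ln2_gt0; lra.
Qed.

Lemma INR_ratio_ge c n k : (0 < k)%N -> (c * k <= n)%N -> INR c <= INR n / INR k.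
Proof.
move=> /ltP/lt_0_INR k_gt0 /leP/le_INR; rewrite mult_INR => ckn.
apply: (Rmult_le_reg_r (INR k)) => //.
by rewrite /Rdiv Rmult_assoc Rinv_l ?Rmult_1_r; lra.
Qed.

Lemma INR_ratio_le c n k : (0 < k)%N -> (n <= c * k)%N -> INR n / INR k <= INR c.
Proof.
move=> /ltP/lt_0_INR k_gt0 /leP/le_INR; rewrite mult_INR => nck.
apply: (Rmult_le_reg_r (INR k)) => //.
by rewrite /Rdiv Rmult_assoc Rinv_l ?Rmult_1_r; lra.
Qed.

Section XlogtermBounds.

Variables n k : nat.
Hypotheses (k_gt0 : (0 < k)%N) (k_le_n : (k <= n)%N).

Let xlogtermE : xlogterm n k = INR k / INR n * log2 (INR n / INR k).
Proof. by rewrite /xlogterm gtn_eqF. Qed.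

Let ratio_ge0 : 0 <= INR k / INR n.
Proof. by apply: (@INR_ratio_ge 0%N) => //; exact: leq_trans k_gt0 k_le_n. Qed.

Let ratio_le1 : INR k / INR n <= 1.
Proof.
by apply: (@INR_ratio_le 1%N); rewrite ?mul1n //; exact: leq_trans k_gt0 k_le_n.
Qed.

Let inv_ratio_ge1 : 1 <= INR n / INR k.
Proof. by apply: (@INR_ratio_ge 1%N); rewrite ?mul1n. Qed.

Lemma xlogterm_ge0 : 0 <= xlogterm n k.
Proof.
rewrite xlogtermE; apply: Rmult_le_pos => //.
by rewrite -log2_1; apply: log2_le; lra.
Qed.

Lemma xlogterm_le2 : (n <= 4 * k)%N -> xlogterm n k <= 2.
Proof.
move=> /(INR_ratio_le (c := 4%N) k_gt0) /= inv_ratio_le4.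
have log2_ge0 : 0 <= log2 (INR n / INR k) by rewrite -log2_1; apply: log2_le; lra.
have log2_le2 : log2 (INR n / INR k) <= 2 by rewrite -log2_4; apply: log2_le; lra.
by rewrite xlogtermE; nra.
Qed.

Lemma xlogterm_ge_ratio : (2 * k <= n)%N -> INR k / INR n <= xlogterm n k.
Proof.
move=> /(INR_ratio_ge (c := 2%N) k_gt0) /= inv_ratio_ge2.
have : 1 <= log2 (INR n / INR k) by rewrite -log2_2; apply: log2_le; lra.
by rewrite xlogtermE; nra.
Qed.

End XlogtermBounds.

Lemma H0_complete_trie_bounds d : 2 / 3 <= H0 (complete_trie d.+1) <= 8.
Proof.
set T := complete_trie d.+1; set k := (2 ^ d.+1).-1.
have k_gt0 : (0 < k)%N by rewrite /k expnS; have := expn_gt0 2 d; lia.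
have nlabT c : nlab T c = k by rewrite /k -(nlab_complete_trie d c).
have nT : nnodes T = (k + k).+1.
  have := nnodes_complete_trie d.+1; rewrite -/T /k (expnS 2 d.+1).
  by have := expn_gt0 2 d.+1; lia.
rewrite (H0_const_nlab nlabT) nT (_ : ((k + k).+1 - k)%N = k.+1); last by lia.
have k_ratio : 1 / 3 <= INR k / INR (k + k).+1.
  have : 1 <= INR k by apply: (le_INR 1); apply/leP.
  rewrite S_INR plus_INR => K_ge1.
  apply: (Rmult_le_reg_r (INR k + INR k + 1)); first by lra.
  by rewrite /Rdiv !Rmult_assoc Rinv_l; lra.
have k_le : (k <= (k + k).+1)%N by lia.
have k1_le : (k.+1 <= (k + k).+1)%N by lia.
have lo1 := xlogterm_ge_ratio k_gt0 k_le ltac:(lia).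
have hi1 := xlogterm_le2 k_gt0 k_le ltac:(lia).
have lo2 := xlogterm_ge0 (ltn0Sn k) k1_le.
have hi2 := xlogterm_le2 (ltn0Sn k) k1_le ltac:(lia).
by change (INR 2) with (1 + 1); lra.
Qed.

Theorem proposition4 :
  exists (sigma : nat) (F : nat -> seq (word sigma)) (C : R),
    Rlt 0 C /\
    forall m : nat,
      is_trie (F m) /\ (m <= nnodes (F m))%N /\
      Rle (INR (runs (F m))) (Rmult C (Rmult (INR (nnodes (F m))) (H0 (F m)))) /\
      Rle (Rmult (INR (nnodes (F m))) (H0 (F m))) (Rmult C (INR (runs (F m)))) /\
      Rle (INR (runs (F m))) (Rmult C (INR (nnodes (F m)))) /\
      Rle (INR (nnodes (F m))) (Rmult C (INR (runs (F m)))).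
Proof.
exists 2%N, (fun m => complete_trie m.+1), 16; split; first lra.
move=> m; set T := complete_trie m.+1.
have nT : (nnodes T).+1 = (2 * runs T)%N.
  by rewrite nnodes_complete_trie runs_complete_trie expnS.
have m_lt_r : (m < runs T)%N.
  by rewrite runs_complete_trie; apply: ltnW; exact: ltn_expl.
have nR : INR (nnodes T) + 1 = 2 * INR (runs T).
  by rewrite -S_INR nT mult_INR.
have rR : 1 <= INR (runs T) by apply: (le_INR 1); apply/leP; lia.
have [H0_lo H0_hi] := H0_complete_trie_bounds m.
have nH_lo : INR (nnodes T) * (2 / 3) <= INR (nnodes T) * H0 T.
  by apply: Rmult_le_compat_l; first exact: pos_INR.
have nH_hi : INR (nnodes T) * H0 T <= INR (nnodes T) * 8.
  by apply: Rmult_le_compat_l; first exact: pos_INR.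
split; first exact: is_trie_complete_trie.
split; first by lia.
by split; [|split; [|split]]; lra.
Qed.
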